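(* Let $m\geq4$ be an integer and let $G$ be an $m$-free digraph. Then for every $v\in V(G)$ and every integer $k$ with $1\leq k\leq m-3$: $$p_k(v)=|E(N^+_{k+1}(v),N^+_{k+2}(v))|,\qquad q_k(v)\leq |\bar E(N^-_{k+1}(v),N^+_1(v))|,\qquad r_k(v)\leq|\bar E(N^-_1(v),N^-_{k+2}(v))|,$$ $$p'_k(v)\leq|\bar E(N^+_1(v),N^+_{k+2}(v))|,\qquad q'_k(v)\leq|\bar E(N^+_{k+1}(v),N^-_1(v))|,\qquad r'_k(v)=|E(N^-_{k+2}(v),N^-_{k+1}(v))|.$$
   Context: All digraphs are finite, without loops and without parallel edges. A digraph is $m$-free if it has no directed cycle of length at most $m$. For a vertex $v$ and $i\geq 0$, $N_i^+(v)$ is the set of vertices $u$ such that the shortest directed path from $v$ to $u$ has length exactly $i$, and $N_i^-(v)$ is the set of vertices $u$ such that the shortest directed path from $u$ to $v$ has length exactly $i$. For $A,B\subseteq V(G)$, $E(A,B)$ is the set of edges $(a,b)$ with $a\in A$, $b\in B$, and $\bar E(A,B)$ is the set of pairs $(a,b)\in A\times B$ with $a\neq b$ such that neither $(a,b)$ nor $(b,a)$ is an edge. A directed path $(v_0,\dots,v_k)$ consists of distinct vertices with $(v_i,v_{i+1})$ an edge for each $i$; its length is $k$. It is induced if every edge of $G$ with both ends in $\{v_0,\dots,v_k\}$ is one of the edges $(v_i,v_{i+1})$; it is a shortest induced directed path if it is induced and $v_k\in N_k^+(v_0)$. Let $\mathscr{P}(G)$ be the set of shortest induced directed paths of $G$.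 For an integer $k\geq1$ and $v\in V(G)$: $P_k(v)$ (resp. $Q_k(v)$, $R_k(v)$) is the set of triples $(x,y,z)$ of vertices for which there exist vertices $w_1,\dots,w_k$ with $(x,w_1,\dots,w_k,y,z)\in\mathscr{P}(G)$ and $x=v$ (resp. $y=v$, $z=v$). $P'_k(v)$ (resp. $Q'_k(v)$, $R'_k(v)$) is the set of triples $(x,y,z)$ for which there exist $w_1,\dots,w_k$ with $(x,y,w_1,\dots,w_k,z)\in\mathscr{P}(G)$ and $x=v$ (resp. $y=v$, $z=v$). Lowercase letters denote cardinalities: $p_k(v)=|P_k(v)|$, etc. *)

(* Digraphs: a finite type T of vertices with an edge
   relation e : rel T (no parallel edges automatically; loops excluded by
   an irreflexivity hypothesis in the theorem). *)
From mathcomp Require Import all_boot.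
Set Implicit Arguments. Unset Strict Implicit. Unset Printing Implicit Defensive.

Section Digraph.
Variables (T : finType) (e : rel T).

Definition has_dpath (x y : T) (k : nat) : bool :=
  [exists s : k.-tuple T, [&& path e x s, uniq (x :: s) & last x s == y]].

Definition Nout (v : T) (i : nat) : {set T} :=
  [set u | has_dpath v u i & [forall j : 'I_i, ~~ has_dpath v u j]].

Definition Nin (v : T) (i : nat) : {set T} :=
  [set u | has_dpath u v i & [forall j : 'I_i, ~~ has_dpath u v j]].

Definition mfree (m : nat) : Prop :=
  forall (x : T) (s : seq T), path e x s -> uniq (x :: s) ->
    e (last x s) x -> m < (size s).+1.

Definition Eset (A B : {set T}) : {set T * T} :=
  [set p : T * T | [&& p.1 \in A, p.2 \in B & e p.1 p.2]].

Definition Ebar (A B : {set T}) : {set T * T} :=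
  [set p : T * T | [&& p.1 \in A, p.2 \in B, p.1 != p.2,
                       ~~ e p.1 p.2 & ~~ e p.2 p.1]].

Definition sipath (x : T) (s : seq T) : bool :=
  [&& path e x s, uniq (x :: s),
      [forall i : 'I_(size s).+1, forall j : 'I_(size s).+1,
         e (nth x (x :: s) i) (nth x (x :: s) j) ==> (j == i.+1 :> nat)]
    & last x s \in Nout x (size s)].

Definition sipA (k : nat) (x y z : T) : bool :=
  [exists w : k.-tuple T, sipath x (w ++ [:: y; z])].
Definition sipB (k : nat) (x y z : T) : bool :=
  [exists w : k.-tuple T, sipath x (y :: w ++ [:: z])].

Definition Pk k v : {set T * T * T} := [set t | sipA k t.1.1 t.1.2 t.2 & t.1.1 == v].
Definition Qk k v : {set T * T * T} := [set t | sipA k t.1.1 t.1.2 t.2 & t.1.2 == v].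
Definition Rk k v : {set T * T * T} := [set t | sipA k t.1.1 t.1.2 t.2 & t.2 == v].
Definition Pk' k v : {set T * T * T} := [set t | sipB k t.1.1 t.1.2 t.2 & t.1.1 == v].
Definition Qk' k v : {set T * T * T} := [set t | sipB k t.1.1 t.1.2 t.2 & t.1.2 == v].
Definition Rk' k v : {set T * T * T} := [set t | sipB k t.1.1 t.1.2 t.2 & t.2 == v].

End Digraph.

From mathcomp Require Import all_boot zify.
Set Implicit Arguments. Unset Strict Implicit. Unset Printing Implicit Defensive.

(* All six counts are compared through explicit maps of triples.
   A triple in one of the sets P_k, ..., R'_k is carried by a shortest induced
   directed path u_0 -> ... -> u_{k+2}; along such a path every segment
   u_i -> ... -> u_j is itself a shortest path (so dist(u_i, u_j) = j - i),
   and vertices at positions differing by at least two are distinct and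
   non-adjacent.  Forgetting the coordinate equal to v therefore injects each
   of the six sets into the edge or non-edge set on the right-hand side.  For
   P_k and R'_k the injection is onto: a shortest path to y extended by an
   edge y -> z with dist(v, z) = k + 2 is again a shortest path, and in an
   m-free digraph every shortest path of length < m is induced, since a chord
   would either shorten it or close a directed cycle of length <= m. *)

Lemma leq_card_inj (A B : finType) (X : {set A}) (Y : {set B}) (p : A -> B) :
  {in X &, injective p} -> (forall x, x \in X -> p x \in Y) -> #|X| <= #|Y|.
Proof.
move=> p_inj pXY; rewrite -(card_in_imset p_inj); apply: subset_leq_card.
by apply/subsetP => _ /imsetP[x Xx ->]; exact: pXY.
Qed.

Lemma mkseq_consS (A : Type) (h : nat -> A) n :
  mkseq h n.+1 = h 0 :: mkseq (fun t => h t.+1) n.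
Proof. by rewrite /mkseq /= -[1]/(1 + 0) iotaDl -map_comp. Qed.

Section Digraph.
Variables (T : finType) (e : rel T).

Definition steps (f : nat -> T) (n : nat) : Prop :=
  forall i, i < n -> e (f i) (f i.+1).

Definition walk (x y : T) (n : nat) : Prop :=
  exists f, [/\ f 0 = x, f n = y & steps f n].

Definition dist (x y : T) (n : nat) : Prop :=
  walk x y n /\ forall j, j < n -> ~ walk x y j.

Lemma walk_refl x : walk x x 0.
Proof. by exists (fun _ => x). Qed.

Lemma walk_edge x y : e x y -> walk x y 1.
Proof. by move=> Exy; exists (fun i => if i is 0 then x else y); split => // -[]. Qed.

Lemma walk_cat x y z a b : walk x y a -> walk y z b -> walk x z (a + b).
Proof.
case=> f [f0 fa Sf] [g [g0 gb Sg]].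
exists (fun i => if i <= a then f i else g (i - a)); split => //.
- case: leqP => [le_ab_a | _]; last by rewrite addKn.
  have b0 : b = 0 by lia.
  by move: gb; rewrite b0 addn0 fa g0.
- move=> i lt_i_ab /=; case: (ltngtP i a) => [lt_ia | lt_ai | eq_ia].
  + exact: Sf.
  + by rewrite subSn; [apply: Sg; lia | exact: ltnW].
  + by subst i; rewrite subSn // subnn fa -g0; apply: Sg; lia.
Qed.

Lemma walk_sub f n i j : steps f n -> i <= j <= n -> walk (f i) (f j) (j - i).
Proof.
move=> Sf /andP[le_ij le_jn]; exists (fun t => f (i + t)); split.
- by rewrite addn0.
- by rewrite subnKC.
- by move=> t lt_t; rewrite addnS; apply: Sf; lia.
Qed.

(* Encoding f 0, ..., f n as the sequence f 0 :: fseq f n, the shape used by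
   has_dpath and sipath. *)
Definition fseq (f : nat -> T) (n : nat) : seq T := mkseq (fun t => f t.+1) n.

Lemma nth_fseq f n i : i <= n -> nth (f 0) (f 0 :: fseq f n) i = f i.
Proof. by case: i => [|i] //= lt_in; rewrite nth_mkseq. Qed.

Lemma path_fseq f n : steps f n -> path e (f 0) (fseq f n).
Proof.
move=> Sf; apply/(pathP (f 0)) => i; rewrite size_mkseq => lt_in.
by rewrite nth_fseq ?nth_mkseq //; [exact: Sf | exact: ltnW].
Qed.

Lemma uniq_fseq f n :
  (forall i j, i <= n -> j <= n -> f i = f j -> i = j) -> uniq (f 0 :: fseq f n).
Proof.
move=> f_inj; apply/(uniqP (f 0)) => i j; rewrite /in_mem /= size_mkseq => le_in le_jn.
by rewrite !nth_fseq //; exact: f_inj.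
Qed.

Lemma last_fseq f n : last (f 0) (fseq f n) = f n.
Proof. by rewrite (last_nth (f 0)) size_mkseq nth_fseq. Qed.

Lemma steps_nth x s : path e x s -> steps (nth x (x :: s)) (size s).
Proof. by move=> p_s i lt_i; exact: (pathP x p_s). Qed.

Lemma dpath_walk x y n : has_dpath e x y n -> walk x y n.
Proof.
case/existsP=> s /and3P[p_s _ /eqP <-]; exists (nth x (x :: s)); split => //.
- by rewrite (last_nth x) size_tuple.
- by have := steps_nth p_s; rewrite size_tuple.
Qed.

Lemma walk_dpath x y n : walk x y n -> exists2 j, j <= n & has_dpath e x y j.
Proof.
case=> f [<- <- Sf]; have := last_fseq f n.
case: (shortenP (path_fseq Sf)) => s p_s u_s sub_s last_s.
exists (size s).
  by case/andP: u_s => _ /uniq_leq_size/(_ sub_s); rewrite size_mkseq.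
by apply/existsP; exists (in_tuple s); rewrite p_s u_s last_s eqxx.
Qed.

Lemma distP x y n :
  (has_dpath e x y n && [forall j : 'I_n, ~~ has_dpath e x y j]) <-> dist x y n.
Proof.
split.
- case/andP=> dp_n /forallP no_short; split; first exact: dpath_walk.
  move=> j lt_jn /walk_dpath[j' le_j'j dp_j'].
  by have := no_short (Ordinal (leq_ltn_trans le_j'j lt_jn)); rewrite dp_j'.
- case=> w_n no_short; case: (walk_dpath w_n) => j le_jn dp_j.
  have [lt_jn | lt_nj | eq_jn] := ltngtP j n.
  + by case: (no_short j lt_jn); exact: dpath_walk.
  + by rewrite ltnNge le_jn in lt_nj.
  + subst j; rewrite dp_j /=; apply/forallP => i; apply/negP => /dpath_walk.
    exact: no_short (ltn_ord i).
Qed.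

Lemma in_Nout v u n : u \in Nout e v n <-> dist v u n.
Proof. by rewrite inE; exact: distP. Qed.

Lemma in_Nin v u n : u \in Nin e v n <-> dist u v n.
Proof. by rewrite inE; exact: distP. Qed.

Definition geodesic (f : nat -> T) (n : nat) : Prop :=
  steps f n /\ dist (f 0) (f n) n.

Lemma geodesic_dist f n i j d :
  geodesic f n -> i + d = j -> j <= n -> dist (f i) (f j) d.
Proof.
move=> [Sf [_ min_n]] def_j le_jn; split.
  by have := walk_sub Sf (i := i) (j := j); rewrite -def_j addKn; apply; lia.
move=> l lt_ld w_l.
have pre : walk (f 0) (f i) i by have := walk_sub Sf (i := 0) (j := i); rewrite subn0; apply; lia.
have post : walk (f j) (f n) (n - j) by apply: walk_sub Sf _; lia.
by apply: (min_n (i + l + (n - j))); [lia | exact: walk_cat (walk_cat pre w_l) post].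
Qed.

Lemma geodesic_Nout f n i j d :
  geodesic f n -> i + d = j -> j <= n -> f j \in Nout e (f i) d.
Proof. by move=> g_f def_j le_jn; apply/in_Nout; exact: geodesic_dist g_f def_j le_jn. Qed.

Lemma geodesic_Nin f n i j d :
  geodesic f n -> i + d = j -> j <= n -> f i \in Nin e (f j) d.
Proof. by move=> g_f def_j le_jn; apply/in_Nin; exact: geodesic_dist g_f def_j le_jn. Qed.

Lemma geodesic_inj f n i j : geodesic f n -> i <= n -> j <= n -> f i = f j -> i = j.
Proof.
move=> g_f le_in le_jn; wlog lt_ij : i j le_in le_jn / i < j.
  move=> IH f_ij; case: (ltngtP i j) => [lt_ij|lt_ji|//]; first exact: IH.
  by apply/esym/IH.
move=> f_ij; have [_ no_short] := geodesic_dist g_f (subnKC (ltnW lt_ij)) le_jn.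
by case: (no_short 0); [lia | rewrite f_ij; exact: walk_refl].
Qed.

Definition chordless (f : nat -> T) (n : nat) : Prop :=
  forall i j, i <= n -> j <= n -> e (f i) (f j) -> j = i.+1.

Section Mfree.
Variable m : nat.
Hypothesis m_free : mfree e m.

(* A backward edge on a geodesic closes a directed cycle of length i - j + 1,
   which must therefore exceed m. *)
Lemma geodesic_back_edge f n i j :
  geodesic f n -> j < i <= n -> e (f i) (f j) -> m <= i - j.
Proof.
move=> g_f lt_ji e_ij; pose g t := f (j + t).
have Sg : steps g (i - j) by move=> t lt_t; rewrite /g addnS; apply: g_f.1; lia.
have g_inj : forall a b, a <= i - j -> b <= i - j -> g a = g b -> a = b.
  move=> a b le_a le_b g_ab; suff : j + a = j + b by lia.
  by apply: (geodesic_inj g_f _ _ g_ab); lia.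
have := m_free (path_fseq Sg) (uniq_fseq g_inj).
by rewrite last_fseq size_mkseq /g subnKC ?addn0; [move=> /(_ e_ij); lia | lia].
Qed.

Lemma geodesic_chordless f n :
  irreflexive e -> n < m -> geodesic f n -> chordless f n.
Proof.
move=> irr_e lt_nm g_f i j le_in le_jn e_ij.
case: (ltngtP j i.+1) => [lt_j_i1 | lt_i1_j | //].
- case: (eqVneq j i) => [eq_ji | ne_ji]; first by rewrite eq_ji irr_e in e_ij.
  have lt_ji : j < i <= n by lia.
  by have := geodesic_back_edge g_f lt_ji e_ij; lia.
- have [_ no_short] := geodesic_dist g_f (subnKC (ltnW (ltnW lt_i1_j))) le_jn.
  by case: (no_short 1); [lia | exact: walk_edge].
Qed.

End Mfree.

Lemma sipath_geodesic x s : sipath e x s ->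
  geodesic (nth x (x :: s)) (size s) /\ chordless (nth x (x :: s)) (size s).
Proof.
case/and4P=> p_s _ /forallP no_chord /in_Nout d_last; split.
  by split; [exact: steps_nth | rewrite -(last_nth x)].
move=> i j le_is le_js e_ij.
pose i' := Ordinal (le_is : i < (size s).+1); pose j' := Ordinal (le_js : j < (size s).+1).
by have /forallP/(_ j')/implyP/(_ e_ij)/eqP := no_chord i'.
Qed.

Lemma geodesic_sipath f n : geodesic f n -> chordless f n -> sipath e (f 0) (fseq f n).
Proof.
move=> g_f c_f; have f_inj i j := @geodesic_inj f n i j g_f.
rewrite /sipath (path_fseq g_f.1) (uniq_fseq f_inj).
rewrite size_mkseq last_fseq /=; apply/andP; split; last by apply/in_Nout; exact: g_f.2.
apply/forallP => i; apply/forallP => j; apply/implyP.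
have le_in : i <= n by rewrite -ltnS.
have le_jn : j <= n by rewrite -ltnS.
by rewrite !nth_fseq // => /(c_f _ _ le_in le_jn) ->.
Qed.

Lemma chordless_Ebar f n i j (A B : {set T}) :
  geodesic f n -> chordless f n -> i.+1 < j <= n ->
  f i \in A -> f j \in B -> (f i, f j) \in Ebar e A B.
Proof.
move=> g_f c_f /andP[lt_ij le_jn] Ai Bj; have le_in : i <= n by lia.
have no_edge a b : a <= n -> b <= n -> b != a.+1 -> ~~ e (f a) (f b).
  by move=> le_a le_b; apply: contra => /(c_f a b le_a le_b) ->.
have ne_ij : f i != f j.
  by apply/eqP => /(geodesic_inj g_f le_in le_jn) eq_ij; rewrite eq_ij ltnNge leqnSn in lt_ij.
by rewrite inE /= Ai Bj ne_ij !no_edge //; apply/eqP; lia.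
Qed.

Lemma EbarC (A B : {set T}) a b : ((a, b) \in Ebar e A B) = ((b, a) \in Ebar e B A).
Proof. by rewrite !inE /= eq_sym; case: (a \in A) (b \in B) (e a b) (e b a) => [] [] [] []. Qed.

Lemma sipA_geodesic k x y z : sipA e k x y z -> exists f,
  [/\ f 0 = x, f k.+1 = y, f k.+2 = z, geodesic f k.+2 & chordless f k.+2].
Proof.
case/existsP=> w /sipath_geodesic; set s := _ ++ _.
have -> : size s = k.+2 by rewrite size_cat size_tuple addn2.
case=> g_f c_f; exists (nth x (x :: s)); split => //=.
- by rewrite nth_cat size_tuple ltnn subnn.
- by rewrite nth_cat size_tuple ltnNge leqnSn /= subSnn.
Qed.

Lemma sipB_geodesic k x y z : sipB e k x y z -> exists f,
  [/\ f 0 = x, f 1 = y, f k.+2 = z, geodesic f k.+2 & chordless f k.+2].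
Proof.
case/existsP=> w /sipath_geodesic; set s := y :: _.
have -> : size s = k.+2 by rewrite /= size_cat size_tuple addn1.
case=> g_f c_f; exists (nth x (x :: s)); split => //=.
by rewrite nth_cat size_tuple ltnn subnn.
Qed.

Lemma geodesic_snoc x y z n : walk x y n -> e y z -> dist x z n.+1 ->
  exists f, [/\ f 0 = x, f n = y, f n.+1 = z & geodesic f n.+1].
Proof.
case=> f [f0 fn Sf] e_yz d_xz; pose g i := if i <= n then f i else z.
have Sg : steps g n.+1.
  move=> i lt_i; rewrite /g; case: (ltngtP i n) => [lt_in | lt_ni | ->].
  - exact: Sf.
  - by rewrite ltnNge -ltnS lt_i in lt_ni.
  - by rewrite fn.
have g0 : g 0 = x by rewrite /g f0.
have gn1 : g n.+1 = z by rewrite /g ltnn.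
exists g; split => //; first by rewrite /g leqnn fn.
by split; last rewrite g0 gn1.
Qed.

Lemma geodesic_cons x y z n : e x y -> walk y z n -> dist x z n.+1 ->
  exists f, [/\ f 0 = x, f 1 = y, f n.+1 = z & geodesic f n.+1].
Proof.
move=> e_xy [f [f0 fn Sf]] d_xz; pose g i := if i is i'.+1 then f i' else x.
have Sg : steps g n.+1 by case=> [|i] lt_i /=; [rewrite f0 | apply: Sf].
by exists g; split => //=; split => //=; rewrite fn.
Qed.

Section Construction.
Variable m : nat.
Hypotheses (irr_e : irreflexive e) (m_free : mfree e m).

Lemma sipA_of_dist k v y z : k.+2 < m ->
  dist v y k.+1 -> dist v z k.+2 -> e y z -> sipA e k v y z.
Proof.
move=> lt_km [w_y _] d_z e_yz; have [f [f0 fy fz g_f]] := geodesic_snoc w_y e_yz d_z.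
have := geodesic_sipath g_f (geodesic_chordless m_free irr_e lt_km g_f).
rewrite /fseq !mkseqS -!cats1 -catA /= f0 fy fz => sip.
by apply/existsP; exists (@Tuple k T (mkseq (fun t => f t.+1) k) (introT eqP (size_mkseq _ _))).
Qed.

Lemma sipB_of_dist k x y v : k.+2 < m ->
  dist y v k.+1 -> dist x v k.+2 -> e x y -> sipB e k x y v.
Proof.
move=> lt_km [w_y _] d_x e_xy; have [f [f0 fy fv g_f]] := geodesic_cons e_xy w_y d_x.
have := geodesic_sipath g_f (geodesic_chordless m_free irr_e lt_km g_f).
rewrite /fseq mkseq_consS mkseqS -cats1 /= f0 fy fv => sip.
by apply/existsP; exists (@Tuple k T (mkseq (fun t => f t.+2) k) (introT eqP (size_mkseq _ _))).
Qed.

End Construction.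
End Digraph.

(* Each count is bounded by forgetting the coordinate of the triple that
   equals v; these bounds hold in every digraph. *)
Section Counting.
Variables (T : finType) (e : rel T) (v : T) (k : nat).

Lemma card_Pk_le : #|Pk e k v| <= #|Eset e (Nout e v k.+1) (Nout e v k.+2)|.
Proof.
apply: (leq_card_inj (p := fun t => (t.1.2, t.2))).
  by move=> [[? ?] ?] [[? ?] ?]; rewrite !inE /= => /andP[_ /eqP->] /andP[_ /eqP->] [-> ->].
move=> [[x y] z]; rewrite [_ \in Pk _ _ _]inE /=.
case/andP=> /sipA_geodesic[f [<- <- <- g_f _]] /eqP <-.
rewrite inE /=; apply/and3P; split; last exact: g_f.1.
  by apply: geodesic_Nout g_f _ _; lia.
by apply: geodesic_Nout g_f _ _; lia.
Qed.

Lemma card_Qk_le : #|Qk e k v| <= #|Ebar e (Nin e v k.+1) (Nout e v 1)|.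
Proof.
apply: (leq_card_inj (p := fun t => (t.1.1, t.2))).
  by move=> [[? ?] ?] [[? ?] ?]; rewrite !inE /= => /andP[_ /eqP->] /andP[_ /eqP->] [-> ->].
move=> [[x y] z]; rewrite [_ \in Qk _ _ _]inE /=.
case/andP=> /sipA_geodesic[f [<- <- <- g_f c_f]] /eqP <-.
apply: (chordless_Ebar g_f c_f); first lia.
  by apply: geodesic_Nin g_f _ _; lia.
by apply: geodesic_Nout g_f _ _; lia.
Qed.

(* The next two bounds need k >= 1: the recorded vertices are k + 1 apart on
   the path, hence non-adjacent only when k + 1 >= 2.  (x, y, v) |-> (y, x) *)
Lemma card_Rk_le : 1 <= k -> #|Rk e k v| <= #|Ebar e (Nin e v 1) (Nin e v k.+2)|.
Proof.
move=> ge_k1; apply: (leq_card_inj (p := fun t => (t.1.2, t.1.1))).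
  by move=> [[? ?] ?] [[? ?] ?]; rewrite !inE /= => /andP[_ /eqP->] /andP[_ /eqP->] [-> ->].
move=> [[x y] z]; rewrite [_ \in Rk _ _ _]inE /=.
case/andP=> /sipA_geodesic[f [<- <- <- g_f c_f]] /eqP <-.
rewrite EbarC; apply: (chordless_Ebar g_f c_f); first lia.
  by apply: geodesic_Nin g_f _ _; lia.
by apply: geodesic_Nin g_f _ _; lia.
Qed.

Lemma card_Pk'_le : 1 <= k -> #|Pk' e k v| <= #|Ebar e (Nout e v 1) (Nout e v k.+2)|.
Proof.
move=> ge_k1; apply: (leq_card_inj (p := fun t => (t.1.2, t.2))).
  by move=> [[? ?] ?] [[? ?] ?]; rewrite !inE /= => /andP[_ /eqP->] /andP[_ /eqP->] [-> ->].
move=> [[x y] z]; rewrite [_ \in Pk' _ _ _]inE /=.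
case/andP=> /sipB_geodesic[f [<- <- <- g_f c_f]] /eqP <-.
apply: (chordless_Ebar g_f c_f); first lia.
  by apply: geodesic_Nout g_f _ _; lia.
by apply: geodesic_Nout g_f _ _; lia.
Qed.

Lemma card_Qk'_le : #|Qk' e k v| <= #|Ebar e (Nout e v k.+1) (Nin e v 1)|.
Proof.
apply: (leq_card_inj (p := fun t => (t.2, t.1.1))).
  by move=> [[? ?] ?] [[? ?] ?]; rewrite !inE /= => /andP[_ /eqP->] /andP[_ /eqP->] [-> ->].
move=> [[x y] z]; rewrite [_ \in Qk' _ _ _]inE /=.
case/andP=> /sipB_geodesic[f [<- <- <- g_f c_f]] /eqP <-.
rewrite EbarC; apply: (chordless_Ebar g_f c_f); first lia.
  by apply: geodesic_Nin g_f _ _; lia.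
by apply: geodesic_Nout g_f _ _; lia.
Qed.

Lemma card_Rk'_le : #|Rk' e k v| <= #|Eset e (Nin e v k.+2) (Nin e v k.+1)|.
Proof.
apply: (leq_card_inj (p := fun t => (t.1.1, t.1.2))).
  by move=> [[? ?] ?] [[? ?] ?]; rewrite !inE /= => /andP[_ /eqP->] /andP[_ /eqP->] [-> ->].
move=> [[x y] z]; rewrite [_ \in Rk' _ _ _]inE /=.
case/andP=> /sipB_geodesic[f [<- <- <- g_f _]] /eqP <-.
rewrite inE /=; apply/and3P; split; last exact: g_f.1.
  by apply: geodesic_Nin g_f _ _; lia.
by apply: geodesic_Nin g_f _ _; lia.
Qed.

Section Equalities.
Variable m : nat.
Hypotheses (irr_e : irreflexive e) (m_free : mfree e m) (lt_km : k.+2 < m).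

Lemma card_Pk : #|Pk e k v| = #|Eset e (Nout e v k.+1) (Nout e v k.+2)|.
Proof.
apply/eqP; rewrite eqn_leq card_Pk_le /=.
apply: (leq_card_inj (p := fun t => (v, t.1, t.2))); first by move=> [? ?] [? ?] _ _ [-> ->].
move=> [y z]; rewrite inE /= => /and3P[/in_Nout d_y /in_Nout d_z e_yz].
by rewrite inE /= eqxx andbT; exact: (sipA_of_dist irr_e m_free lt_km d_y d_z e_yz).
Qed.

Lemma card_Rk' : #|Rk' e k v| = #|Eset e (Nin e v k.+2) (Nin e v k.+1)|.
Proof.
apply/eqP; rewrite eqn_leq card_Rk'_le /=.
apply: (leq_card_inj (p := fun t => (t.1, t.2, v))); first by move=> [? ?] [? ?] _ _ [-> ->].
move=> [x y]; rewrite inE /= => /and3P[/in_Nin d_x /in_Nin d_y e_xy].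
by rewrite inE /= eqxx andbT; exact: (sipB_of_dist irr_e m_free lt_km d_y d_x e_xy).
Qed.

End Equalities.
End Counting.

Theorem lemma2p3 (T : finType) (e : rel T) (m : nat) :
  irreflexive e -> 4 <= m -> mfree e m ->
  forall (v : T) (k : nat), 1 <= k -> k <= m - 3 ->
  #|Pk e k v| = #|Eset e (Nout e v k.+1) (Nout e v k.+2)| /\
      #|Qk e k v| <= #|Ebar e (Nin e v k.+1) (Nout e v 1)| /\
      #|Rk e k v| <= #|Ebar e (Nin e v 1) (Nin e v k.+2)| /\
      #|Pk' e k v| <= #|Ebar e (Nout e v 1) (Nout e v k.+2)| /\
      #|Qk' e k v| <= #|Ebar e (Nout e v k.+1) (Nin e v 1)| /\
      #|Rk' e k v| = #|Eset e (Nin e v k.+2) (Nin e v k.+1)|.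
Proof.
move=> irr_e ge_m4 m_free v k ge_k1 le_km.
have lt_km : k.+2 < m by lia.
split; first exact: (card_Pk v irr_e m_free lt_km).
split; first exact: card_Qk_le.
split; first exact: card_Rk_le.
split; first exact: card_Pk'_le.
split; first exact: card_Qk'_le.
exact: (card_Rk' v irr_e m_free lt_km).
Qed.
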